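(* Let $N\ge1$, $k,m\in\mathbb{Z}$, and let $\varphi:\mathbb{H}\times\mathbb{C}\to\mathbb{C}$ transform like a Jacobi form of weight $k$ and index $m$ with respect to $\Gamma\ltimes\mathbb{Z}^2$ for a subgroup $\Gamma\subseteq\mathrm{SL}(2,\mathbb{Z})$. Define $\varphi_1(\tau,z)=\varphi(N\tau,z)$ when $\Gamma\in\{\Gamma^0(N),\Gamma^1(N)\}$, and $\varphi_2(\tau,z)=N^{-k/2}\tau^{-k}\mathbf{e}(-mz^2/(N\tau))\varphi(-\frac1{N\tau},\frac z{N\tau})$ when $\Gamma\in\{\Gamma_0(N),\Gamma_1(N)\}$. Then $\varphi_1|_{k,\frac mN}\gamma=\varphi_1$ for all $\gamma\in\Gamma_0(N)$ if $\Gamma=\Gamma^0(N)$ and for all $\gamma\in\Gamma_1(N)$ if $\Gamma=\Gamma^1(N)$; $\varphi_2|_{k,\frac mN}\gamma=\varphi_2$ for all $\gamma\in\Gamma$ (for $\Gamma\in\{\Gamma_0(N),\Gamma_1(N)\}$); and $\varphi_i|_{\frac mN}X=\varphi_i$ for all $X\in N\mathbb{Z}\times\mathbb{Z}$ ($i=1,2$, whenever defined).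
   Context: $\mathbf{e}(t)=e^{2\pi it}$. For $\gamma=\begin{pmatrix}a&b\\c&d\end{pmatrix}$ and real index $\mu_0$: $(\varphi|_{k,\mu_0}\gamma)(\tau,z)=(c\tau+d)^{-k}\mathbf{e}(-\mu_0\frac{cz^2}{c\tau+d})\varphi(\frac{a\tau+b}{c\tau+d},\frac z{c\tau+d})$; for $X=(\lambda,\mu)$: $(\varphi|_{\mu_0}X)(\tau,z)=\mathbf{e}(\mu_0(\lambda^2\tau+2\lambda z+\lambda\mu))\varphi(\tau,z+\lambda\tau+\mu)$. ''Transforms like a Jacobi form of weight $k$, index $m$ w.r.t. $\Gamma\ltimes\mathbb{Z}^2$'' means $\varphi|_{k,m}\gamma=\varphi$ for $\gamma\in\Gamma$ and $\varphi|_mX=\varphi$ for $X\in\mathbb{Z}^2$. $\Gamma_0(N)$: $c\equiv0\bmod N$; $\Gamma_1(N)$: $c\equiv0$, $a\equiv d\equiv1\bmod N$; $\Gamma^0(N)$: $b\equiv0\bmod N$; $\Gamma^1(N)$: $b\equiv0$, $a\equiv d\equiv1\bmod N$. *)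

From HB Require Import structures.
From mathcomp Require Import all_boot all_order all_algebra.
From mathcomp Require Import complex.
From mathcomp Require Import reals sequences exp trigo.
Set Implicit Arguments. Unset Strict Implicit. Unset Printing Implicit Defensive.
Import Order.TTheory GRing.Theory Num.Theory.
Local Open Scope ring_scope.

Section Defs.
Variable R : realType.
Local Notation C := (complex R).

Definition cexp (w : C) : C :=
  Complex (expR (complex.Re w) * cos (complex.Im w)) (expR (complex.Re w) * sin (complex.Im w)).

Definition ee (t : C) : C := cexp (Complex 0 (2 * pi) * t).

Definition RtoC (x : R) : C := Complex x 0.

Definition inH (tau : C) : Prop := 0 < complex.Im tau.

Definition ga (g : 'M[int]_2) : int := g 0 0.
Definition gb (g : 'M[int]_2) : int := g 0 1.
Definition gc (g : 'M[int]_2) : int := g 1 0.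
Definition gd (g : 'M[int]_2) : int := g 1 1.

Definition inSL2Z (g : 'M[int]_2) : Prop := \det g = 1.

Definition Gamma_0 (N : nat) (g : 'M[int]_2) : Prop :=
  inSL2Z g /\ (N%:Z %| gc g)%Z.
Definition Gamma_1 (N : nat) (g : 'M[int]_2) : Prop :=
  inSL2Z g /\ (N%:Z %| gc g)%Z /\ (ga g = 1 %[mod N%:Z])%Z /\ (gd g = 1 %[mod N%:Z])%Z.
Definition Gamma0 (N : nat) (g : 'M[int]_2) : Prop :=
  inSL2Z g /\ (N%:Z %| gb g)%Z.
Definition Gamma1 (N : nat) (g : 'M[int]_2) : Prop :=
  inSL2Z g /\ (N%:Z %| gb g)%Z /\ (ga g = 1 %[mod N%:Z])%Z /\ (gd g = 1 %[mod N%:Z])%Z.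

Definition slash (k : int) (mu0 : R) (g : 'M[int]_2) (phi : C -> C -> C)
  (tau z : C) : C :=
  let a : C := (ga g)%:~R in let b : C := (gb g)%:~R in
  let c : C := (gc g)%:~R in let d : C := (gd g)%:~R in
  (c * tau + d) ^ (- k) * ee (- (RtoC mu0) * (c * z ^+ 2 / (c * tau + d)))
  * phi ((a * tau + b) / (c * tau + d)) (z / (c * tau + d)).

Definition slashX (mu0 : R) (lam mu : int) (phi : C -> C -> C) (tau z : C) : C :=
  let l : C := lam%:~R in let u : C := mu%:~R in
  ee (RtoC mu0 * (l ^+ 2 * tau + 2 * l * z + l * u)) * phi tau (z + l * tau + u).

Definition invariant_slash (k : int) (mu0 : R) (G : 'M[int]_2 -> Prop)
  (phi : C -> C -> C) : Prop :=
  forall g, G g -> forall tau z, inH tau -> slash k mu0 g phi tau z = phi tau z.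

Definition invariant_heis (mu0 : R) (L : int -> int -> Prop) (phi : C -> C -> C) : Prop :=
  forall lam mu, L lam mu -> forall tau z, inH tau -> slashX mu0 lam mu phi tau z = phi tau z.

Definition transforms_like_Jacobi (k m : int) (G : 'M[int]_2 -> Prop)
  (phi : C -> C -> C) : Prop :=
  invariant_slash k m%:~R G phi /\ invariant_heis m%:~R (fun _ _ => True) phi.

Definition phi_1 (N : nat) (phi : C -> C -> C) (tau z : C) : C :=
  phi (N%:R * tau) z.

Definition phi_2 (N : nat) (k m : int) (phi : C -> C -> C) (tau z : C) : C :=
  RtoC (Num.sqrt (N%:R : R) ^ (- k)) * tau ^ (- k)
  * ee (- (m%:~R) * z ^+ 2 / (N%:R * tau))
  * phi (- 1 / (N%:R * tau)) (z / (N%:R * tau)).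

Definition NZxZ (N : nat) (lam mu : int) : Prop := (N%:Z %| lam)%Z.

End Defs.

(* phi_1 is phi composed with diag(N,1), and phi_2 is phi slashed by the
   Fricke matrix W_N = (0 -1; N 0), normalised by N^(-k/2).  Slashing phi_1 by
   g = (a b; c d) with N | c therefore amounts to slashing phi by
   diag(N,1) g diag(N,1)^-1 = (a Nb; c/N d), and slashing phi_2 by g amounts to
   slashing phi by W_N g W_N^-1 = (d -c/N; -Nb a).  The first conjugation maps
   Gamma_0(N), Gamma_1(N) into Gamma^0(N), Gamma^1(N), the second one maps
   Gamma_0(N), Gamma_1(N) into themselves.  Likewise the lattice vector
   (N lam, mu) acting on phi_1 (resp. phi_2) becomes (lam, mu) (resp. (-mu, lam))
   acting on phi.  The index drops from m to m/N because tau is rescaled by N. *)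

From HB Require Import structures.
From mathcomp Require Import all_boot all_order all_algebra.
From mathcomp Require Import complex.
From mathcomp Require Import reals sequences exp trigo.
From mathcomp Require Import ring.
Set Implicit Arguments. Unset Strict Implicit. Unset Printing Implicit Defensive.
Import Order.TTheory GRing.Theory Num.Theory.
Local Open Scope ring_scope.

Lemma det_mx22 (R : comNzRingType) (A : 'M[R]_2) :
  \det A = A 0 0 * A 1 1 - A 0 1 * A 1 0.
Proof.
rewrite (expand_det_row _ 0) !big_ord_recl big_ord0 /cofactor !det_mx11 !mxE /=.
have -> : lift 0 (@ord0 0) = 1 by apply: val_inj.
have -> : lift 1 (@ord0 0) = 0 by apply: val_inj.
rewrite /bump /= expr0 expr1; ring.
Qed.

Definition mx22 (a b c d : int) : 'M[int]_2 :=
  \matrix_(i < 2, j < 2)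
    if i == 0 then (if j == 0 then a else b) else (if j == 0 then c else d).

Lemma mx22E (a b c d : int) : [/\ ga (mx22 a b c d) = a, gb (mx22 a b c d) = b,
  gc (mx22 a b c d) = c & gd (mx22 a b c d) = d].
Proof. by rewrite /ga /gb /gc /gd !mxE. Qed.

Lemma inSL2ZE (g : 'M[int]_2) : inSL2Z g <-> ga g * gd g - gb g * gc g = 1.
Proof. by rewrite /inSL2Z det_mx22. Qed.

Lemma inSL2Z_mx22 (a b c d : int) : inSL2Z (mx22 a b c d) <-> a * d - b * c = 1.
Proof. by rewrite inSL2ZE; case: (mx22E a b c d) => -> -> -> ->. Qed.

Section Conjugates.
Variable N : nat.

Definition diagN_conj (g : 'M[int]_2) : 'M[int]_2 :=
  mx22 (ga g) (N%:Z * gb g) (gc g %/ N%:Z)%Z (gd g).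

Definition fricke_conj (g : 'M[int]_2) : 'M[int]_2 :=
  mx22 (gd g) (- (gc g %/ N%:Z)%Z) (- (N%:Z * gb g)) (ga g).

Lemma diagN_conjE (g : 'M[int]_2) : [/\ ga (diagN_conj g) = ga g, gb (diagN_conj g) = N%:Z * gb g,
  gc (diagN_conj g) = (gc g %/ N%:Z)%Z & gd (diagN_conj g) = gd g].
Proof. exact: mx22E. Qed.

Lemma fricke_conjE (g : 'M[int]_2) : [/\ ga (fricke_conj g) = gd g,
  gb (fricke_conj g) = - (gc g %/ N%:Z)%Z, gc (fricke_conj g) = - (N%:Z * gb g)
  & gd (fricke_conj g) = ga g].
Proof. exact: mx22E. Qed.

Lemma Gamma_0_diagN_conj (g : 'M[int]_2) : Gamma_0 N g -> Gamma0 N (diagN_conj g).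
Proof.
move=> [/inSL2ZE hdet /divzK hc]; split; last first.
  by case: (diagN_conjE g) => _ -> _ _; exact/dvdz_mulr/dvdzz.
by rewrite /diagN_conj inSL2Z_mx22 -hdet -{2}hc; ring.
Qed.

Lemma Gamma_1_diagN_conj (g : 'M[int]_2) : Gamma_1 N g -> Gamma1 N (diagN_conj g).
Proof.
move=> [hSL [hc a_d_1]]; have [? ?] := Gamma_0_diagN_conj (conj hSL hc).
by do 2!split=> //; case: (diagN_conjE g) => -> _ _ ->.
Qed.

Lemma Gamma_0_fricke_conj (g : 'M[int]_2) : Gamma_0 N g -> Gamma_0 N (fricke_conj g).
Proof.
move=> [/inSL2ZE hdet /divzK hc]; split; last first.
  by case: (fricke_conjE g) => _ _ -> _; rewrite rpredN; exact/dvdz_mulr/dvdzz.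
by rewrite /fricke_conj inSL2Z_mx22 -hdet -{2}hc; ring.
Qed.

Lemma Gamma_1_fricke_conj (g : 'M[int]_2) : Gamma_1 N g -> Gamma_1 N (fricke_conj g).
Proof.
move=> [hSL [hc [a_1 d_1]]]; have [? ?] := Gamma_0_fricke_conj (conj hSL hc).
by do 2!split=> //; case: (fricke_conjE g) => -> _ _ ->.
Qed.

Lemma Gamma_1_sub_Gamma_0 (g : 'M[int]_2) : Gamma_1 N g -> Gamma_0 N g.
Proof. by case=> hSL [hc _]. Qed.

End Conjugates.

Lemma expfz_mul_div (F : fieldType) (x y : F) (k : int) :
  x != 0 -> x ^ k * (y / x) ^ k = y ^ k.
Proof. by move=> x0; rewrite -expfzMl mulrC divfK. Qed.

Section Jacobi.
Variable R : realType.
Local Notation C := (complex R).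

Lemma cexpD (x y : C) : cexp (x + y) = cexp x * cexp y.
Proof.
case: x => a b; case: y => c d; rewrite /cexp /= expRD cosD sinD.
by apply/eqP; rewrite eq_complex /=; apply/andP; split; apply/eqP; ring.
Qed.

Lemma eeD (x y : C) : ee (x + y) = ee x * ee y.
Proof. by rewrite /ee mulrDr cexpD. Qed.

Lemma RtoC_intr (m : int) : RtoC (m%:~R) = m%:~R :> C.
Proof. exact: (rmorph_int (real_complex R)). Qed.

Lemma RtoC_intr_divn (m : int) (N : nat) : RtoC (m%:~R / N%:R) = m%:~R / N%:R :> C.
Proof. by rewrite /RtoC -[Complex _ _]/((_ / _)%:C%C) fmorph_div rmorph_int rmorph_nat. Qed.

Lemma inH_neq0 (t : C) : inH t -> t != 0.
Proof. by rewrite /inH; apply: contraTneq => ->; rewrite ltxx. Qed.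

Lemma Im_realM (r : R) (t : C) : complex.Im (r%:C%C * t) = r * complex.Im t.
Proof. by case: t => a b /=; ring. Qed.

Lemma Im_intrM (x : int) (t : C) : complex.Im (x%:~R * t) = x%:~R * complex.Im t.
Proof. by rewrite -(rmorph_int (real_complex R)) Im_realM. Qed.

Lemma Im_intr (x : int) : complex.Im (x%:~R : C) = 0.
Proof. by rewrite -(rmorph_int (real_complex R)). Qed.

Lemma inH_bezout_neq0 (x y u v : int) (t : C) :
  inH t -> x * u + y * v = 1 -> x%:~R * t + y%:~R != 0.
Proof.
move=> ht hxy; have [x0|xn0] := eqVneq x 0.
  rewrite x0 mul0r add0r intr_eq0; apply/eqP => y0.
  by move: hxy; rewrite x0 y0 !mul0r addr0 => /esym/eqP; rewrite oner_eq0.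
rewrite /inH in ht; apply: contraTneq ht => /(congr1 (@complex.Im R)).
rewrite raddfD /= Im_intrM Im_intr addr0 => /eqP.
by rewrite mulf_eq0 intr_eq0 (negbTE xn0) => /eqP ->; rewrite ltxx.
Qed.

Lemma inH_natrM (N : nat) (t : C) : (0 < N)%N -> inH t -> inH (N%:R * t).
Proof. by move=> hN ht; rewrite /inH -(rmorph_nat (real_complex R)) Im_realM mulr_gt0 ?ltr0n. Qed.

Lemma inH_fricke (N : nat) (t : C) : (0 < N)%N -> inH t -> inH (- 1 / (N%:R * t)).
Proof.
move=> hN ht; have -> : - 1 / (N%:R * t) = (- (N%:R)^-1)%:C%C * t^-1.
  by rewrite rmorphN fmorphV rmorph_nat invfM; ring.
rewrite /inH Im_realM; case: t ht => a b; rewrite /inH /= => hb.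
by rewrite mulNr !mulrN opprK mulr_gt0 ?invr_gt0 ?ltr0n ?divr_gt0 ?ltr_wpDl ?sqr_ge0 ?exprn_gt0.
Qed.

Section Rescaling.
Variable N : nat.
Hypothesis N_gt0 : (0 < N)%N.

Lemma natrC_neq0 : (N%:R : C) != 0.
Proof. by rewrite pnatr_eq0 -lt0n. Qed.

Lemma slash_phi_1 (k m : int) (phi : C -> C -> C) (g : 'M[int]_2) (tau z : C) :
  (N%:Z %| gc g)%Z ->
  slash k (m%:~R / N%:R) g (phi_1 N phi) tau z
  = phi_1 N (slash k m%:~R (diagN_conj N g) phi) tau z.
Proof.
move=> /divzK; rewrite /slash /phi_1; case: (diagN_conjE N g) => -> -> -> ->.
set c' := (gc g %/ N%:Z)%Z => <-; rewrite RtoC_intr_divn RtoC_intr !rmorphM /=.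
have -> : c'%:~R * N%:R * tau = c'%:~R * (N%:R * tau) :> C by ring.
have hN0 := natrC_neq0.
congr (_ * ee _ * phi _ _); rewrite !mulrA; congr (_ / _).
- by field.
- ring.
Qed.

Lemma slashX_phi_1 (m : int) (phi : C -> C -> C) (l mu : int) (tau z : C) :
  slashX (m%:~R / N%:R) (l * N%:Z) mu (phi_1 N phi) tau z
  = phi_1 N (slashX m%:~R l mu phi) tau z.
Proof.
rewrite /slashX /phi_1 RtoC_intr_divn RtoC_intr !rmorphM /=.
have hN0 := natrC_neq0.
by congr (ee _ * phi _ _); [field | ring].
Qed.

Lemma slash_phi_2 (k m : int) (phi : C -> C -> C) (g : 'M[int]_2) (tau z : C) :
  inH tau -> inSL2Z g -> (N%:Z %| gc g)%Z ->
  slash k (m%:~R / N%:R) g (phi_2 N k m phi) tau z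
  = phi_2 N k m (slash k m%:~R (fricke_conj N g) phi) tau z.
Proof.
move=> ht /inSL2ZE + /divzK; rewrite /slash /phi_2; case: (fricke_conjE N g) => -> -> -> ->.
set a := ga g; set b := gb g; set d := gd g; set c' := (gc g %/ N%:Z)%Z.
move=> hdet hc; rewrite -hc in hdet *.
have hD : (c' * N%:Z)%:~R * tau + d%:~R != 0 :> C.
  by apply: (inH_bezout_neq0 (u := - b) (v := a)); rewrite // -hdet; ring.
have hA : a%:~R * tau + b%:~R != 0 :> C.
  by apply: (inH_bezout_neq0 (u := d) (v := - (c' * N%:Z))); rewrite // -hdet; ring.
have hdetC : a%:~R * d%:~R - b%:~R * (c'%:~R * N%:R) = 1 :> C.
  by have := congr1 (fun x : int => x%:~R : C) hdet; rewrite /= rmorphB !rmorphM.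
rewrite !rmorphM /= in hD.
have [ht0 hN0] := (inH_neq0 ht, natrC_neq0).
rewrite RtoC_intr_divn RtoC_intr !(rmorphN, rmorphM) /=.
set D := c'%:~R * N%:~R * tau + d%:~R; set A := a%:~R * tau + b%:~R.
set J := _ * (-1 / (N%:R * tau)) + a%:~R.
have hJ : J = A / tau by rewrite /J /A; field; rewrite ht0 hN0.
set P1 := D ^ (- k); set P2 := (A / D) ^ (- k).
set P3 := tau ^ (- k); set P4 := J ^ (- k).
set e1 := ee (_ * (_ * z ^+ 2 / D)); set e2 := ee (- _ * (z / D) ^+ 2 / _).
set e3 := ee (- _ * z ^+ 2 / _); set e4 := ee (- _ * (_ * _ / J)).
set s := RtoC _; set F := phi (-1 / _) _.
have hpow : P1 * P2 = P3 * P4 by rewrite /P1 /P2 /P3 /P4 hJ !expfz_mul_div.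
have hee : e1 * e2 = e3 * e4.
  rewrite /e1 /e2 /e3 /e4 -!eeD; congr ee; apply/eqP; rewrite -subr_eq0; apply/eqP.
  (* The two exponents differ by a multiple of 1 - det g. *)
  transitivity (- m%:~R * z ^+ 2 / (N%:R * D * A)
                * (1 - (a%:~R * d%:~R - b%:~R * (c'%:~R * N%:R)))).
    by rewrite hJ /D /A; field; rewrite hA hN0 ht0 /= andbT; exact: hD.
  by apply/eqP; rewrite mulf_eq0 subr_eq0; apply/orP; right; apply/eqP; exact/esym/hdetC.
transitivity (s * (P1 * P2) * (e1 * e2) * F); first by ring.
rewrite hpow hee; transitivity (s * P3 * e3 * (P4 * e4 * F)); first by ring.
by congr (_ * (_ * phi _ _)); rewrite hJ /D /A; field; rewrite ht0 hA hN0 /=; exact: hD.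
Qed.

Lemma slashX_phi_2 (k m : int) (phi : C -> C -> C) (l mu : int) (tau z : C) :
  tau != 0 ->
  slashX (m%:~R / N%:R) (l * N%:Z) mu (phi_2 N k m phi) tau z
  = phi_2 N k m (slashX m%:~R (- mu) l phi) tau z.
Proof.
move=> ht0; have hN0 := natrC_neq0.
rewrite /slashX /phi_2 RtoC_intr_divn RtoC_intr !(rmorphN, rmorphM) /=.
rewrite -!mulrA mulrCA; congr (_ * _); rewrite mulrCA; congr (_ * _).
by rewrite !mulrA -!eeD; congr (ee _ * phi _ _); field; rewrite hN0 ht0.
Qed.

Lemma invariant_slash_phi_1 (k m : int) (G G' : 'M[int]_2 -> Prop)
    (phi : C -> C -> C) :
  (forall g, G' g -> G (diagN_conj N g)) -> (forall g, G' g -> Gamma_0 N g) ->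
  invariant_slash k m%:~R G phi ->
  invariant_slash k (m%:~R / N%:R) G' (phi_1 N phi).
Proof.
move=> hG hG0 Hphi g hg tau z ht; have [_ hc] := hG0 g hg.
by rewrite slash_phi_1 // /phi_1 (Hphi _ (hG g hg) _ _ (inH_natrM N_gt0 ht)).
Qed.

Lemma invariant_heis_phi_1 (m : int) (phi : C -> C -> C) :
  invariant_heis m%:~R (fun _ _ => True) phi ->
  invariant_heis (m%:~R / N%:R) (NZxZ N) (phi_1 N phi).
Proof.
move=> Hphi lam mu /divzK <- tau z ht.
by rewrite slashX_phi_1 /phi_1 (Hphi _ _ I _ _ (inH_natrM N_gt0 ht)).
Qed.

Lemma invariant_slash_phi_2 (k m : int) (G G' : 'M[int]_2 -> Prop)
    (phi : C -> C -> C) :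
  (forall g, G' g -> G (fricke_conj N g)) -> (forall g, G' g -> Gamma_0 N g) ->
  invariant_slash k m%:~R G phi ->
  invariant_slash k (m%:~R / N%:R) G' (phi_2 N k m phi).
Proof.
move=> hG hG0 Hphi g hg tau z ht; have [hSL hc] := hG0 g hg.
by rewrite slash_phi_2 // /phi_2 (Hphi _ (hG g hg) _ _ (inH_fricke N_gt0 ht)).
Qed.

Lemma invariant_heis_phi_2 (k m : int) (phi : C -> C -> C) :
  invariant_heis m%:~R (fun _ _ => True) phi ->
  invariant_heis (m%:~R / N%:R) (NZxZ N) (phi_2 N k m phi).
Proof.
move=> Hphi lam mu /divzK <- tau z ht.
by rewrite slashX_phi_2 ?inH_neq0 // /phi_2 (Hphi _ _ I _ _ (inH_fricke N_gt0 ht)).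
Qed.

End Rescaling.

End Jacobi.


Theorem proposition4p1 (R : realType) (N : nat) (hN : (1 <= N)%N) (k m : int)
  (phi : complex R -> complex R -> complex R) :
  let mN : R := m%:~R / N%:R in
  (transforms_like_Jacobi k m (Gamma0 N) phi ->
     invariant_slash k mN (Gamma_0 N) (phi_1 N phi)
     /\ invariant_heis mN (NZxZ N) (phi_1 N phi)) /\
  (transforms_like_Jacobi k m (Gamma1 N) phi ->
     invariant_slash k mN (Gamma_1 N) (phi_1 N phi)
     /\ invariant_heis mN (NZxZ N) (phi_1 N phi)) /\
  (transforms_like_Jacobi k m (Gamma_0 N) phi ->
     invariant_slash k mN (Gamma_0 N) (phi_2 N k m phi)
     /\ invariant_heis mN (NZxZ N) (phi_2 N k m phi)) /\
  (transforms_like_Jacobi k m (Gamma_1 N) phi ->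
     invariant_slash k mN (Gamma_1 N) (phi_2 N k m phi)
     /\ invariant_heis mN (NZxZ N) (phi_2 N k m phi)).
Proof.
move=> mN; split; [|split; [|split]] => -[Hslash Hheis]; split.
- by apply: (invariant_slash_phi_1 hN (@Gamma_0_diagN_conj N)).
- by apply: (invariant_heis_phi_1 hN).
- by apply: (invariant_slash_phi_1 hN (@Gamma_1_diagN_conj N) (@Gamma_1_sub_Gamma_0 N)).
- by apply: (invariant_heis_phi_1 hN).
- by apply: (invariant_slash_phi_2 hN (@Gamma_0_fricke_conj N)).
- by apply: (invariant_heis_phi_2 hN).
- by apply: (invariant_slash_phi_2 hN (@Gamma_1_fricke_conj N) (@Gamma_1_sub_Gamma_0 N)).
- by apply: (invariant_heis_phi_2 hN).
Qed.
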